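(* Assume $\langle f\rangle_X=0$, $N/p\in\mathbb N$, and that $\psi$ satisfies (A1) and (A2). Then there exists a constant $C_3$, depending only on $c_\psi,C_\psi,C'_\psi$ and $p$ (in particular independent of $\epsilon$ and $f$), such that \[ \|u^0-u\|_{L^2}\le C_3\,\epsilon\,\|f\|_{L^2}, \] where $u$ solves the atomistic problem and $u^0$ solves the homogenized problem.
   Context: Let $\epsilon>0$ and $N,p$ be positive integers, with the normalization $N\epsilon=1$. Set $X_i=\epsilon i$ ($i\in\mathbb Z$) and $Y_j=j$. $U^N_{\rm per}(\epsilon\mathbb Z)$ is the space of functions $u:\epsilon\mathbb Z\to\mathbb R$ with $u(X_{i+N})=u(X_i)$ for all $i$; $U^N_\#(\epsilon\mathbb Z)$ is the subspace with $\langle u\rangle_X:=\frac1N\sum_{i=1}^N u(X_i)=0$. For $u,v\in U^N_{\rm per}(\epsilon\mathbb Z)$: $\langle u,v\rangle_X=\frac1N\sum_{i=1}^N u(X_i)v(X_i)$, $Du(X_i)=(u(X_{i+1})-u(X_i))/\epsilon$, $\|u\|_{L^2}=(\frac1N\sum_{i=1}^N|u(X_i)|^2)^{1/2}$. A two-scale function is $g:\epsilon\mathbb Z\times\mathbb Z\to\mathbb R$ with $g(X_{i+N},Y_j)=g(X_i,Y_j)=g(X_i,Y_{j+p})$; set $D_Xg(X_i,Y_j)=(g(X_{i+1},Y_j)-g(X_i,Y_j))/\epsilon$, $\langle g\rangle_Y(X_i)=\frac1p\sum_{j=1}^p g(X_i,Y_j)$, $\|g\|_{L^\infty(N,p)}=\max_{1\le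 i\le N,1\le j\le p}|g(X_i,Y_j)|$. $\psi$ is a two-scale function satisfying (A1) $0<c_\psi\le\psi(X_i,Y_j)\le C_\psi$ for all $i,j$, and (A2) $\|D_X\psi\|_{L^\infty(N,p)}\le C'_\psi$. Define $\psi^\epsilon(X_i)=\psi(X_i,X_i/\epsilon)$ and $\psi^0(X_i)=\langle1/\psi(X_i,\cdot)\rangle_Y^{-1}$. $f\in U^N_{\rm per}(\epsilon\mathbb Z)$. Atomistic problem: $u\in U^N_\#(\epsilon\mathbb Z)$ with $\langle\psi^\epsilon Du,Dv\rangle_X=\langle f,v\rangle_X$ for all $v\in U^N_{\rm per}(\epsilon\mathbb Z)$. Homogenized problem: $u^0\in U^N_\#(\epsilon\mathbb Z)$ with $\langle\psi^0Du^0,Dv\rangle_X=\langle f,v\rangle_X$ for all $v\in U^N_{\rm per}(\epsilon\mathbb Z)$. *)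

From mathcomp Require Import all_boot all_order all_algebra.
From mathcomp Require Import reals.
Set Implicit Arguments. Unset Strict Implicit. Unset Printing Implicit Defensive.
Import Order.TTheory GRing.Theory Num.Theory.
Local Open Scope ring_scope.

(* A lattice function on eps*Z is represented by its values at the indices:
   u : int -> R, with u i = u(X_i), X_i = eps * i, eps = 1/N.
   A two-scale function g : int -> int -> R, g i j = g(X_i, Y_j), Y_j = j. *)

Section Defs.
Variable R : realType.

Definition epsN (N : nat) : R := (N%:R)^-1.

Definition periodicN (N : nat) (u : int -> R) : Prop :=
  forall i : int, u (i + N%:Z) = u i.

Definition meanX (N : nat) (u : int -> R) : R :=
  (N%:R)^-1 * \sum_(1 <= i < N.+1) u i%:Z.

Definition innerX (N : nat) (u v : int -> R) : R :=
  meanX N (fun i => u i * v i).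

Definition Dop (N : nat) (u : int -> R) : int -> R :=
  fun i => (u (i + 1) - u i) / epsN N.

Definition L2norm (N : nat) (u : int -> R) : R :=
  Num.sqrt (meanX N (fun i => u i ^+ 2)).

Definition two_scale (N p : nat) (g : int -> int -> R) : Prop :=
  forall i j : int, g (i + N%:Z) j = g i j /\ g i (j + p%:Z) = g i j.

Definition DX (N : nat) (g : int -> int -> R) : int -> int -> R :=
  fun i j => (g (i + 1) j - g i j) / epsN N.

Definition Linf_Np (N p : nat) (g : int -> int -> R) : R :=
  \big[Num.max/0]_(1 <= i < N.+1) \big[Num.max/0]_(1 <= j < p.+1) `|g i%:Z j%:Z|.

Definition meanY (p : nat) (g : int -> int -> R) (i : int) : R :=
  (p%:R)^-1 * \sum_(1 <= j < p.+1) g i j%:Z.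

(* psi^eps(X_i) = psi(X_i, X_i/eps) = psi(X_i, Y_i) since X_i/eps = i *)
Definition psi_eps (psi : int -> int -> R) : int -> R := fun i => psi i i.

Definition psi0 (p : nat) (psi : int -> int -> R) : int -> R :=
  fun i => (meanY p (fun i' j => (psi i' j)^-1) i)^-1.

Definition solves (N : nat) (a f u : int -> R) : Prop :=
  periodicN N u /\ meanX N u = 0 /\
  forall v : int -> R, periodicN N v ->
    innerX N (fun i => a i * Dop N u i) (Dop N v) = innerX N f v.

End Defs.

From mathcomp Require Import all_boot all_order all_algebra.
From mathcomp Require Import reals ring lra zify.
Import Order.TTheory GRing.Theory Num.Theory.
Local Open Scope ring_scope.

(* In one dimension the flux sigma = a Du of a solution is determined by f up to a
   constant: testing with a periodic Kronecker delta gives sigma_k - sigma_(k+1) =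
   eps f_(k+1).  So the fluxes of u and u0 differ by a constant d and
   D(u0 - u) = d / psi0 - sigma (1 / psi_eps - 1 / psi0).  Over each period p of the
   fast variable the gap 1 / psi_eps - 1 / psi0 averages to zero up to O(eps), since
   psi is Lipschitz in the slow variable; hence its partial sums are bounded uniformly
   in eps.  Abel summation then bounds the partial sums of sigma times the gap by
   O(|f|_L1), periodicity of u0 - u fixes d within the same bound, and u0 - u, whose
   mean vanishes, has size O(eps |f|_L1) <= O(eps |f|_L2). *)

Section RealSequences.
Context {R : realFieldType}.
Implicit Types (s g q x : nat -> R).

Lemma ler_sum_nat_const (F : nat -> R) (m n : nat) (B : R) :
  (forall i, (m <= i < n)%N -> F i <= B) -> \sum_(m <= i < n) F i <= (n - m)%:R * B.
Proof. by move=> F_le; rewrite mulr_natl -sumr_const_nat; apply: ler_sum_nat. Qed.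

Lemma sum_subrange_le (h : nat -> R) (m n m' n' : nat) :
  (m' <= m)%N -> (m <= n)%N -> (n <= n')%N -> (forall i, 0 <= h i) ->
  \sum_(m <= i < n) h i <= \sum_(m' <= i < n') h i.
Proof.
move=> m'm mn nn' h_ge0; have sum_ge0 a b : 0 <= \sum_(a <= i < b) h i by rewrite sumr_ge0.
rewrite (big_cat_nat m'm (leq_trans mn nn')) (big_cat_nat mn nn') /=.
by rewrite addrCA lerDl addr_ge0.
Qed.

Lemma abel_summation s g (k : nat) :
  \sum_(0 <= m < k) s m.+1 * g m.+1 =
  s k * \sum_(0 <= m < k) g m.+1 +
  \sum_(0 <= m < k) (s m - s m.+1) * \sum_(0 <= i < m) g i.+1.
Proof.
elim: k => [|k IH]; first by rewrite !big_geq // mulr0 addr0.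
by rewrite !big_nat_recr //= IH; ring.
Qed.

Lemma dist_le_sum_steps x (k : nat) :
  `|x k - x 0%N| <= \sum_(0 <= m < k) `|x m.+1 - x m|.
Proof. by rewrite -telescope_sumr // ler_norm_sum. Qed.

Lemma weighted_mean0_bound q x (N : nat) (B : R) : (0 < N)%N ->
  (forall m, 0 < q m) -> \sum_(0 <= m < N) q m.+1 * x m.+1 = 0 ->
  (forall k, (k < N)%N -> `|x k.+1 - x 1%N| <= B) ->
  forall k, (k < N)%N -> `|x k.+1| <= 2 * B.
Proof.
move=> N_gt0 q_gt0 x_mean0 x_osc.
set Q := \sum_(0 <= m < N) q m.+1.
have Q_gt0 : 0 < Q.
  by rewrite /Q big_ltn // ltr_wpDr ?q_gt0 // sumr_ge0 // => i _; apply: ltW.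
have x1_bound : `|x 1%N| <= B.
  rewrite -(ler_pM2r Q_gt0) -{1}(ger0_norm (ltW Q_gt0)) -normrM.
  have -> : x 1%N * Q = \sum_(0 <= m < N) (x 1%N - x m.+1) * q m.+1.
    rewrite -[LHS]subr0 -{1}x_mean0 /Q mulr_sumr -sumrB.
    by apply: eq_bigr => m _; ring.
  apply: le_trans (ler_norm_sum _ _ _) _; rewrite /Q mulr_sumr.
  apply: ler_sum_nat => m /andP[_ mN].
  rewrite normrM (ger0_norm (ltW (q_gt0 _))) distrC.
  by apply: ler_wpM2r; [exact: ltW | exact: x_osc].
move=> k kN; rewrite -(subrK (x 1%N) (x k.+1)).
by apply: le_trans (ler_normD _ _) _; rewrite mulr2n mulrDl mul1r lerD ?x_osc.
Qed.

Lemma dist_inv_le (c y z : R) : 0 < c -> c <= y -> c <= z ->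
  `|y^-1 - z^-1| <= `|y - z| / c ^+ 2.
Proof.
move=> c_gt0 cy cz; have y_gt0 : 0 < y by lra.
rewrite (_ : y^-1 - z^-1 = (z - y) / (y * z)); last first.
  by field; apply/andP; split; apply: lt0r_neq0; lra.
rewrite normrM normfV (ger0_norm (x := y * z)); last by nra.
by rewrite distrC ler_wpM2l // lef_pV2 ?posrE; nra.
Qed.

Lemma invr_bounds (c C y : R) : 0 < c -> c <= y <= C -> C^-1 <= y^-1 <= c^-1.
Proof.
move=> c_gt0 /andP[cy yC]; have y_gt0 : 0 < y by lra.
by rewrite !lef_pV2 ?posrE ?cy ?yC //; lra.
Qed.

Lemma sum_blocks_bound g (p k : nat) (A beta : R) : (0 < p)%N ->
  0 <= A -> 0 <= beta ->
  (forall t : nat, (t * p + p <= k)%N ->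
     `|\sum_(t * p <= m < t * p + p) g m| <= p%:R * beta) ->
  (forall m, (m < k)%N -> `|g m| <= A) ->
  `|\sum_(0 <= m < k) g m| <= k%:R * beta + p%:R * A.
Proof.
move=> p_gt0 A_ge0 beta_ge0 block_le g_le.
have full_le : forall t, (t * p <= k)%N ->
    `|\sum_(0 <= m < t * p) g m| <= (t * p)%N%:R * beta.
  elim=> [|t IH] tpk; first by rewrite mul0n big_geq // normr0 mul0r.
  rewrite mulSnr (big_cat_nat _ (n := (t * p)%N)) //=; last by lia.
  rewrite natrD mulrDl; apply: le_trans (ler_normD _ _) _.
  by rewrite lerD ?block_le ?IH //; lia.
rewrite {1}(divn_eq k p) (big_cat_nat _ (n := (k %/ p * p)%N)) //=; last by lia.
apply: le_trans (ler_normD _ _) _; apply: lerD.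
  apply: le_trans (full_le _ _) _; first by rewrite leq_divM.
  by rewrite ler_wpM2r // ler_nat leq_divM.
apply: le_trans (ler_norm_sum _ _ _) _.
apply: le_trans (ler_sum_nat (G := fun _ => A) _) _.
  by move=> m /andP[_ mk]; apply: g_le; rewrite [X in (_ < X)%N](divn_eq k p).
rewrite sumr_const_nat addKn -[A *+ _]mulr_natl; apply: ler_wpM2r => //.
by rewrite ler_nat ltnW // ltn_pmod.
Qed.

End RealSequences.

Definition flux {R : realType} (N : nat) (a u : int -> R) (k : nat) : R :=
  a k%:Z * Dop N u k%:Z.

Lemma Posz_add1 (k : nat) : k%:Z + 1 = k.+1%:Z.
Proof. by rewrite -addn1 PoszD. Qed.

Section PeriodicLattice.
Context {R : realType} {N : nat}.
Hypothesis N_gt0 : (0 < N)%N.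
Implicit Types (a f h s u v : int -> R).

Let N_gt0R : (0 : R) < N%:R.
Proof. by rewrite ltr0n. Qed.

Let N_neq0 : (N%:R : R) != 0.
Proof. exact: lt0r_neq0. Qed.

Lemma meanX_nat v : meanX N v = N%:R^-1 * \sum_(0 <= m < N) v m.+1%:Z.
Proof. by rewrite /meanX big_add1. Qed.

Lemma sum_periodic_shift {h} : periodicN N h ->
  \sum_(1 <= i < N.+1) h (i%:Z + 1) = \sum_(1 <= i < N.+1) h i%:Z.
Proof.
move=> h_per; case: N N_gt0 h_per => // n _ h_per.
rewrite big_nat_recr //= [RHS]big_ltn // [in RHS]big_add1 /= addrC.
congr (_ + _); last by apply: eq_bigr => i _; rewrite Posz_add1.
by rewrite addrC h_per.
Qed.

Lemma periodic_summation_by_parts {s v} : periodicN N s -> periodicN N v ->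
  \sum_(1 <= i < N.+1) s i%:Z * (v (i%:Z + 1) - v i%:Z) =
  \sum_(1 <= i < N.+1) (s (i%:Z - 1) - s i%:Z) * v i%:Z.
Proof.
move=> s_per v_per.
have sv_per : periodicN N (fun i => s (i - 1) * v i).
  by move=> i; rewrite addrAC s_per v_per.
have := sum_periodic_shift sv_per; rewrite /= => shift.
under eq_bigr do rewrite mulrBr.
under [RHS]eq_bigr do rewrite mulrBl.
by rewrite !sumrB -shift; under eq_bigr do rewrite addrK.
Qed.

Definition periodic_delta (k : nat) : int -> R :=
  fun i => if ((i - k%:Z) %% N%:Z == 0)%Z then 1 else 0.

Lemma periodic_delta_periodic k : periodicN N (periodic_delta k).
Proof. by move=> i; rewrite /periodic_delta addrAC modzDr. Qed.

Lemma modz_eq0_eq {i k : int} : ((i - k) %% N%:Z = 0)%Z ->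
  1 <= i <= N%:Z -> 1 <= k <= N%:Z -> i = k.
Proof.
move=> ik_mod i_range k_range; have := divz_eq (i - k) N%:Z.
rewrite ik_mod addr0; set q := (_ %/ _)%Z => ik_eq.
have [q_le|[q0|q_ge]] : q <= -1 \/ q = 0 \/ 1 <= q by lia.
- have : q * N%:Z <= - N%:Z by rewrite -mulN1r ler_wpM2r.
  lia.
- by move: ik_eq; rewrite q0 mul0r => /eqP; rewrite subr_eq0 => /eqP.
- have : N%:Z <= q * N%:Z by rewrite -{1}(mul1r N%:Z) ler_wpM2r.
  lia.
Qed.

Lemma sum_periodic_delta h (k : nat) : (1 <= k <= N)%N ->
  \sum_(1 <= i < N.+1) h i%:Z * periodic_delta k i%:Z = h k%:Z.
Proof.
move=> k_range; rewrite (bigD1_seq k) ?iota_uniq //=; last by rewrite mem_index_iota; lia.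
rewrite /periodic_delta subrr mod0z eqxx mulr1 big1_seq ?addr0 //.
move=> i /andP[ik]; rewrite mem_index_iota => i_range.
case: ifP => [/eqP ik_mod|]; last by rewrite mulr0.
have ik_eq : i%:Z = k%:Z by apply: (modz_eq0_eq ik_mod); lia.
by move: ik; rewrite -eqz_nat ik_eq eqxx.
Qed.

Lemma solves_flux_jump {a f u} : periodicN N a -> solves N a f u ->
  forall k : nat, (k < N)%N -> flux N a u k - flux N a u k.+1 = f k.+1%:Z / N%:R.
Proof.
move=> a_per [u_per [_ u_weak]] k kN.
set v := periodic_delta k.+1.
have au_per : periodicN N (fun i => a i * Dop N u i).
  by move=> i; rewrite /Dop a_per (addrAC i N%:Z 1) !u_per.
have Dv : forall i, Dop N v i = N%:R * (v (i + 1) - v i).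
  by move=> i; rewrite /Dop /epsN invrK mulrC.
have := u_weak v (periodic_delta_periodic _).
rewrite /innerX /meanX; under eq_bigr do rewrite Dv mulrCA.
rewrite -mulr_sumr mulKf // (periodic_summation_by_parts au_per (periodic_delta_periodic _)).
rewrite (sum_periodic_delta (fun i => a (i - 1) * Dop N u (i - 1) - a i * Dop N u i));
  last by lia.
rewrite sum_periodic_delta; last by lia.
rewrite -Posz_add1 addrK /flux Posz_add1 => ->; by rewrite mulrC.
Qed.

Lemma sum_Dop u (k : nat) :
  \sum_(0 <= m < k) Dop N u m.+1%:Z = N%:R * (u k.+1%:Z - u 1).
Proof.
rewrite -(telescope_sumr (fun n => u n.+1%:Z)) // mulr_sumr.
by apply: eq_bigr => m _; rewrite /Dop /epsN invrK Posz_add1 mulrC.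
Qed.

Lemma meanX_eq0_sum v : meanX N v = 0 -> \sum_(0 <= m < N) v m.+1%:Z = 0.
Proof. by rewrite meanX_nat => /eqP; rewrite mulf_eq0 invr_eq0 (negPf N_neq0) => /eqP. Qed.

Lemma meanX_abs_le_L2norm v : meanX N (fun i => `|v i|) <= L2norm N v.
Proof.
set m := meanX N _.
have m_ge0 : 0 <= m by rewrite /m /meanX mulr_ge0 ?invr_ge0 ?sumr_ge0.
have sum_abs : \sum_(1 <= i < N.+1) `|v i%:Z| = N%:R * m by rewrite /m /meanX mulVKf.
have var_ge0 : 0 <= \sum_(1 <= i < N.+1) (`|v i%:Z| - m) ^+ 2.
  by apply: sumr_ge0 => i _; apply: sqr_ge0.
have var_eq : \sum_(1 <= i < N.+1) (`|v i%:Z| - m) ^+ 2 =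
              \sum_(1 <= i < N.+1) v i%:Z ^+ 2 - N%:R * m ^+ 2.
  under eq_bigr do rewrite sqrrB real_normK ?num_real //.
  rewrite big_split sumrB /= sumrMnl -mulr_suml sum_abs sumr_const_nat subn1 /=.
  by rewrite -mulr_natl; ring.
rewrite /L2norm -(ger0_norm m_ge0) -sqrtr_sqr ler_sqrt /meanX; last first.
  by rewrite mulr_ge0 ?invr_ge0 // sumr_ge0 // => i _; apply: sqr_ge0.
by rewrite -(ler_pM2l N_gt0R) mulVKf //; lra.
Qed.

Lemma L2norm_le v (B : R) : 0 <= B ->
  (forall m : nat, (m < N)%N -> `|v m.+1%:Z| <= B) -> L2norm N v <= B.
Proof.
move=> B_ge0 v_le; rewrite /L2norm -(ger0_norm B_ge0) -sqrtr_sqr ler_sqrt ?sqr_ge0 //.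
rewrite meanX_nat ler_pdivrMl // mulr_natl -{2}(subn0 N) -sumr_const_nat.
apply: ler_sum_nat => m /andP[_ mN].
by rewrite -real_normK ?num_real // lerXn2r ?nnegrE ?normr_ge0 // v_le; lia.
Qed.

Lemma solves_flux_le a f u : periodicN N a -> (forall i, 0 < a i) -> solves N a f u ->
  forall k : nat, (k < N)%N -> `|flux N a u k.+1| <= 2 * meanX N (fun i => `|f i|).
Proof.
(* The flux divided by a is Du, which sums to zero over a period; the oscillation
   of the flux is the total jump, bounded by the mean of |f|. *)
move=> a_per a_gt0 u_sol; have jump := solves_flux_jump a_per u_sol.
apply: (weighted_mean0_bound (fun m => (a m%:Z)^-1)) => //.
- by move=> m; rewrite invr_gt0.
- under eq_bigr do rewrite /flux mulrA mulVf ?mul1r ?lt0r_neq0 //.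
  by rewrite sum_Dop -Posz_add1 (addrC N%:Z) u_sol.1 subrr mulr0.
move=> k kN; apply: le_trans (dist_le_sum_steps (fun m => flux N a u m.+1) k) _.
have -> : \sum_(0 <= m < k) `|flux N a u m.+2 - flux N a u m.+1| =
          N%:R^-1 * \sum_(1 <= m < k.+1) `|f m.+1%:Z|.
  rewrite big_add1 mulr_sumr; apply: eq_big_nat => m /andP[_ mk].
  rewrite distrC jump; last by lia.
  by rewrite normrM normfV (ger0_norm (ltW N_gt0R)) mulrC.
rewrite meanX_nat; apply: ler_wpM2l; first by rewrite invr_ge0 ltW.
by apply: sum_subrange_le => //; lia.
Qed.

End PeriodicLattice.

Definition inv_gap {R : realType} (a b : int -> R) (m : nat) : R :=
  (a m%:Z)^-1 - (b m%:Z)^-1.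

Section TwoScale.
Context {R : realType} {N p : nat} {psi : int -> int -> R}.
Hypothesis psi_two_scale : two_scale N p psi.

Lemma two_scale_shiftY (t : nat) (i j : int) : psi i (j + (t * p)%N%:Z) = psi i j.
Proof.
elim: t j => [|t IH] j; first by rewrite mul0n addr0.
by rewrite mulSnr PoszD addrA (psi_two_scale _ _).2 IH.
Qed.

Lemma psi_eps_periodic : (p %| N)%N -> periodicN N (psi_eps psi).
Proof.
by move=> /dvdnP[t N_eq] i; rewrite /psi_eps (psi_two_scale _ _).1 N_eq two_scale_shiftY.
Qed.

Lemma psi0_periodic : periodicN N (psi0 p psi).
Proof.
move=> i; rewrite /psi0 /meanY; congr (_^-1 * _)^-1.
by apply: eq_bigr => j _; rewrite (psi_two_scale _ _).1.
Qed.

Lemma meanY_bounds (g : int -> int -> R) (lo hi : R) (i : int) : (0 < p)%N ->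
  (forall j, lo <= g i j <= hi) -> lo <= meanY p g i <= hi.
Proof.
move=> p_gt0 g_bounds; have p_gt0R : (0 : R) < p%:R by rewrite ltr0n.
have mean_const (y : R) : p%:R^-1 * \sum_(1 <= j < p.+1) y = y.
  by rewrite sumr_const_nat subn1 -[y *+ _]mulr_natl mulKf // lt0r_neq0.
rewrite /meanY -{1}(mean_const lo) -(mean_const hi).
have p_inv_ge0 : 0 <= (p%:R : R)^-1 by rewrite invr_ge0 ltW.
by apply/andP; split; apply: ler_wpM2l => //; apply: ler_sum_nat => j _;
  case/andP: (g_bounds j).
Qed.

Lemma psi0_bounds (c C : R) (i : int) : (0 < p)%N -> 0 < c ->
  (forall i j, c <= psi i j <= C) -> c <= psi0 p psi i <= C.
Proof.
move=> p_gt0 c_gt0 psi_bounds.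
have C_gt0 : 0 < C by case/andP: (psi_bounds 0 0) => ? ?; lra.
rewrite -[c]invrK -[C]invrK /psi0; apply: invr_bounds; first by rewrite invr_gt0.
by apply: meanY_bounds => // j; apply: invr_bounds.
Qed.

Lemma Linf_DX_step_le (C' : R) : (0 < N)%N -> Linf_Np N p (DX N psi) <= C' ->
  forall i j : nat, (1 <= i <= N)%N -> (1 <= j <= p)%N ->
  `|psi i.+1%:Z j%:Z - psi i%:Z j%:Z| <= C' / N%:R.
Proof.
move=> N_gt0 DX_le i j i_range j_range.
rewrite ler_pdivlMr ?ltr0n // -[N%:R]ger0_norm // -normrM.
have -> : (psi i.+1%:Z j%:Z - psi i%:Z j%:Z) * N%:R = DX N psi i%:Z j%:Z.
  by rewrite /DX /epsN invrK Posz_add1.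
apply: le_trans DX_le; rewrite /Linf_Np.
have i_in : i \in index_iota 1 N.+1 by rewrite mem_index_iota; lia.
have j_in : j \in index_iota 1 p.+1 by rewrite mem_index_iota; lia.
apply: le_trans (le_bigmax_seq 0 j xpredT (fun j0 => `|DX N psi i%:Z j0%:Z|) j_in isT) _.
exact: (le_bigmax_seq 0 i xpredT
  (fun i0 => \big[Num.max/0]_(1 <= j0 < p.+1) `|DX N psi i0%:Z j0%:Z|) i_in isT).
Qed.

Section InvGapSums.
Variables (c L : R).
Hypotheses (N_gt0 : (0 < N)%N) (p_gt0 : (0 < p)%N) (c_gt0 : 0 < c).
Hypothesis psi_ge : forall i j, c <= psi i j.
Hypothesis psi_step : forall i j : nat, (1 <= i <= N)%N -> (1 <= j <= p)%N ->
  `|psi i.+1%:Z j%:Z - psi i%:Z j%:Z| <= L.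

Let h (i j : int) : R := (psi i j)^-1.
Let p_gt0R : (0 : R) < p%:R. Proof. by rewrite ltr0n. Qed.

Lemma psi_dist_le (s n j : nat) : (1 <= s)%N -> (s + n <= N.+1)%N -> (1 <= j <= p)%N ->
  `|psi (s + n)%N%:Z j%:Z - psi s%:Z j%:Z| <= n%:R * L.
Proof.
move=> s_ge1 sn_le j_range.
have := dist_le_sum_steps (fun m => psi (s + m)%N%:Z j%:Z) n.
rewrite addn0 => /le_trans; apply; rewrite -[X in X%:R * _](subn0 n).
by apply: ler_sum_nat_const => m /andP[_ mn]; rewrite addnS psi_step //; lia.
Qed.

Lemma inv_gap_psi_le (m : nat) : `|inv_gap (psi_eps psi) (psi0 p psi) m| <= c^-1.
Proof.
have h_bounds i j : 0 <= h i j <= c^-1.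
  have psi_gt0 := lt_le_trans c_gt0 (psi_ge i j).
  by rewrite /h invr_ge0 (ltW psi_gt0) lef_pV2 ?posrE ?psi_ge.
have := h_bounds m%:Z m%:Z; have := meanY_bounds _ _ _ m%:Z p_gt0 (h_bounds m%:Z).
rewrite /inv_gap /psi_eps /psi0 invrK -/h; set x := h _ _; set y := meanY _ _ _.
by move=> y_bounds x_bounds; rewrite ler_norml -/(h m%:Z m%:Z) -/x; lra.
Qed.

Lemma inv_gap_period_sum_le (t : nat) : (t * p + p <= N)%N ->
  `|\sum_(t * p <= m < t * p + p) inv_gap (psi_eps psi) (psi0 p psi) m.+1|
    <= p%:R * (2 * p%:R * L / c ^+ 2).
Proof.
(* Freezing the slow variable at the first point of the block makes the block sum
   vanish exactly; [d] is the error of freezing, controlled by the Lipschitz bound. *)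
move=> tp_le; rewrite -{1}(add0n (t * p)%N) big_addn addKn.
set x := fun m : nat => (m + t * p).+1.
set beta := p%:R * L / c ^+ 2.
pose d m j := h (x m)%:Z j - h (x 0%N)%:Z j.
have gap_eq m : inv_gap (psi_eps psi) (psi0 p psi) (x m) =
    h (x m)%:Z m.+1%:Z - p%:R^-1 * \sum_(1 <= j < p.+1) h (x m)%:Z j%:Z.
  rewrite /inv_gap /psi_eps /psi0 invrK /meanY /h /x.
  by rewrite -addSn PoszD two_scale_shiftY.
have frozen : \sum_(0 <= m < p) h (x 0%N)%:Z m.+1%:Z =
    p%:R^-1 * \sum_(0 <= m < p) \sum_(1 <= j < p.+1) h (x 0%N)%:Z j%:Z.
  rewrite sumr_const_nat subn0 mulrnAr -[(_ * _) *+ p]mulr_natr mulrAC.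
  by rewrite mulVf ?mul1r ?big_add1 // lt0r_neq0.
have sum_eq : \sum_(0 <= m < p) inv_gap (psi_eps psi) (psi0 p psi) (x m) =
    \sum_(0 <= m < p) d m m.+1%:Z -
    p%:R^-1 * \sum_(0 <= m < p) \sum_(1 <= j < p.+1) d m j%:Z.
  rewrite /d; under eq_bigr do rewrite gap_eq.
  under [X in _ * X]eq_bigr do rewrite sumrB.
  by rewrite !sumrB frozen mulrBr -!mulr_sumr; ring.
have d_le m j : (m < p)%N -> (1 <= j <= p)%N -> `|d m j%:Z| <= beta.
  move=> mp j_range; rewrite /d /h.
  apply: le_trans (dist_inv_le _ _ _ c_gt0 (psi_ge _ _) (psi_ge _ _)) _.
  apply: ler_wpM2r; first by rewrite invr_ge0 exprn_ge0 // ltW.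
  have := psi_dist_le (x 0%N) m j; rewrite /x !addSn add0n addnC.
  move=> /(_ isT ltac:(lia) j_range) /le_trans; apply.
  apply: ler_wpM2r; last by rewrite ler_nat ltnW.
  by apply: le_trans (psi_step 1 1 _ _); rewrite ?normr_ge0 //; lia.
rewrite sum_eq; apply: le_trans (ler_normB _ _) _.
rewrite normrM (ger0_norm (x := p%:R^-1)); last by rewrite invr_ge0 ltW.
have sum1_le : `|\sum_(0 <= m < p) d m m.+1%:Z| <= p%:R * beta.
  apply: le_trans (ler_norm_sum _ _ _) _.
  rewrite -[X in X%:R * _](subn0 p); apply: ler_sum_nat_const => m /andP[_ mp].
  by rewrite d_le //; lia.
have sum2_le : `|\sum_(0 <= m < p) \sum_(1 <= j < p.+1) d m j%:Z| <= p%:R * (p%:R * beta).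
  apply: le_trans (ler_norm_sum _ _ _) _.
  rewrite -[X in X%:R * _](subn0 p); apply: ler_sum_nat_const => m /andP[_ mp].
  apply: le_trans (ler_norm_sum _ _ _) _.
  rewrite (_ : p%:R * beta = (p.+1 - 1)%N%:R * beta); last by rewrite subn1.
  apply: ler_sum_nat_const => j j_range.
  by rewrite d_le //; lia.
have p_inv_ge0 : 0 <= (p%:R : R)^-1 by rewrite invr_ge0 ltW.
have := ler_wpM2l p_inv_ge0 sum2_le; rewrite mulKf ?lt0r_neq0 // => sum2_le'.
rewrite (_ : _ * (2 * _ * L / _) = p%:R * beta + p%:R * beta); last by rewrite /beta; ring.
exact: lerD.
Qed.

Lemma inv_gap_partial_sum_le (k : nat) : (k <= N)%N ->
  `|\sum_(0 <= m < k) inv_gap (psi_eps psi) (psi0 p psi) m.+1|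
    <= N%:R * (2 * p%:R * L / c ^+ 2) + p%:R * c^-1.
Proof.
move=> kN.
have L_ge0 : 0 <= L by apply: le_trans (psi_step 1 1 _ _); rewrite ?normr_ge0 //; lia.
have beta_ge0 : 0 <= 2 * p%:R * L / c ^+ 2.
  by rewrite mulr_ge0 ?invr_ge0 ?exprn_ge0 ?mulr_ge0 // ltW.
apply: le_trans (sum_blocks_bound (fun m => inv_gap (psi_eps psi) (psi0 p psi) m.+1)
  p k c^-1 _ p_gt0 _ beta_ge0 _ _) _.
- by rewrite invr_ge0 ltW.
- by move=> t tpk; apply: inv_gap_period_sum_le; apply: leq_trans kN.
- by move=> m _; apply: inv_gap_psi_le.
by rewrite lerD2r ler_wpM2r // ler_nat.
Qed.

End InvGapSums.

End TwoScale.

Section HomogenizationError.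
Context {R : realType} {N : nat} {a b f u u0 : int -> R}.
Variables (c C K : R).
Hypotheses (N_gt0 : (0 < N)%N) (c_gt0 : 0 < c).
Hypotheses (a_bounds : forall i, c <= a i <= C) (b_bounds : forall i, c <= b i <= C).
Hypotheses (a_per : periodicN N a) (b_per : periodicN N b).
Hypotheses (u_sol : solves N a f u) (u0_sol : solves N b f u0).
Hypothesis inv_gap_sum_le : forall k : nat, (k <= N)%N ->
  `|\sum_(0 <= m < k) inv_gap a b m.+1| <= K.

Let F := meanX N (fun i => `|f i|).
Let sigma := flux N a u.
Let G (k : nat) := \sum_(0 <= m < k) inv_gap a b m.+1.
Let N_gt0R : (0 : R) < N%:R. Proof. by rewrite ltr0n. Qed.
Let a_gt0 i : 0 < a i. Proof. by case/andP: (a_bounds i) => /(lt_le_trans c_gt0). Qed.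
Let b_gt0 i : 0 < b i. Proof. by case/andP: (b_bounds i) => /(lt_le_trans c_gt0). Qed.
Let c_le_C : c <= C. Proof. by case/andP: (a_bounds 0); apply: le_trans. Qed.
Let C_gt0 : 0 < C. Proof. exact: lt_le_trans c_le_C. Qed.
Let K_ge0 : 0 <= K. Proof. by apply: le_trans (inv_gap_sum_le 0 isT); rewrite normr_ge0. Qed.
Let F_ge0 : 0 <= F.
Proof. by apply: mulr_ge0; [rewrite invr_ge0 ler0n | apply: sumr_ge0]. Qed.

Lemma flux_gap_const (k : nat) : (k <= N)%N ->
  flux N b u0 k - sigma k = flux N b u0 0 - sigma 0.
Proof.
have jump_a := solves_flux_jump N_gt0 a_per u_sol.
have jump_b := solves_flux_jump N_gt0 b_per u0_sol.
elim: k => [//|k IH] kN; rewrite -IH; last exact: ltnW.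
by have := jump_a k kN; have := jump_b k kN; rewrite /sigma; lra.
Qed.

Let d := flux N b u0 0 - sigma 0.

Lemma Dop_error (m : nat) : (m <= N)%N ->
  Dop N u0 m%:Z - Dop N u m%:Z = d * (b m%:Z)^-1 - sigma m * inv_gap a b m.
Proof.
move=> mN; rewrite /d -(flux_gap_const m mN) /sigma /flux /inv_gap.
by field; rewrite !lt0r_neq0.
Qed.

Lemma error_increment (k : nat) : (k <= N)%N ->
  N%:R * ((u0 k.+1%:Z - u k.+1%:Z) - (u0 1 - u 1)) =
  d * \sum_(0 <= m < k) (b m.+1%:Z)^-1 - \sum_(0 <= m < k) sigma m.+1 * inv_gap a b m.+1.
Proof.
move=> kN; rewrite (_ : _ * (_ - _) = N%:R * (u0 k.+1%:Z - u0 1) - N%:R * (u k.+1%:Z - u 1));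
  last by ring.
rewrite -!sum_Dop -sumrB mulr_sumr -sumrB; apply: eq_big_nat => m /andP[_ mk].
by rewrite Dop_error //; lia.
Qed.

Lemma sum_flux_inv_gap_le (k : nat) : (k <= N)%N ->
  `|\sum_(0 <= m < k) sigma m.+1 * inv_gap a b m.+1| <= 3 * F * K.
Proof.
move=> kN; rewrite abel_summation -/(G k).
have sigma_le m : (m < N)%N -> `|sigma m.+1| <= 2 * F.
  by rewrite /sigma /F; apply: solves_flux_le.
have head_le : `|sigma k * G k| <= 2 * F * K.
  case: k kN => [|k] kN.
    by rewrite /G big_geq // mulr0 normr0; do 2 apply: mulr_ge0 => //.
  by rewrite normrM ler_pM ?sigma_le ?inv_gap_sum_le.
have tail_le : `|\sum_(0 <= m < k) (sigma m - sigma m.+1) * G m| <= F * K.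
  apply: le_trans (ler_norm_sum _ _ _) _.
  apply: le_trans (_ : _ <= \sum_(0 <= m < k) `|f m.+1%:Z| / N%:R * K) _.
    apply: ler_sum_nat => m /andP[_ mk].
    rewrite /sigma (solves_flux_jump N_gt0 a_per u_sol); last by lia.
    rewrite !normrM normfV (ger0_norm (ltW N_gt0R)).
    apply: ler_wpM2l; first by rewrite divr_ge0 ?normr_ge0 ?ler0n.
    by apply: inv_gap_sum_le; lia.
  rewrite -mulr_suml; apply: ler_wpM2r => //.
  rewrite /F meanX_nat -mulr_suml mulrC; apply: ler_wpM2l; first by rewrite invr_ge0 ler0n.
  by apply: sum_subrange_le.
by apply: le_trans (ler_normD _ _) _; rewrite (_ : 3 * F * K = 2 * F * K + F * K);
  [apply: lerD | ring].
Qed.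

Let w (i : int) := u0 i - u i.
Let Binv (k : nat) := \sum_(0 <= m < k) (b m.+1%:Z)^-1.

Lemma flux_gap_le : `|d| * Binv N <= 3 * F * K.
Proof.
have Binv_ge0 : 0 <= Binv N by apply: sumr_ge0 => m _; rewrite invr_ge0 ltW.
have := error_increment N (leqnn N).
rewrite -Posz_add1 (addrC N%:Z) (u_sol.1 1) (u0_sol.1 1) subrr mulr0.
move=> /eqP; rewrite eq_sym subr_eq0 => /eqP d_eq.
by rewrite -(ger0_norm Binv_ge0) -normrM d_eq sum_flux_inv_gap_le.
Qed.

Lemma error_osc_le (k : nat) : (k < N)%N ->
  N%:R * `|w k.+1%:Z - w 1| <= 3 * F * K * (C / c + 1).
Proof.
move=> kN; have b_inv_bounds i : C^-1 <= (b i)^-1 <= c^-1 by apply: invr_bounds.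
have Binv_le : Binv k <= N%:R * c^-1.
  apply: le_trans (_ : _ <= (k - 0)%:R * c^-1) _.
    by apply: ler_sum_nat_const => m _; case/andP: (b_inv_bounds m.+1%:Z).
  by rewrite subn0; apply: ler_wpM2r; [rewrite invr_ge0 ltW | rewrite ler_nat ltnW].
have Binv_ge : N%:R * C^-1 <= Binv N.
  rewrite mulr_natl -[X in _ *+ X](subn0 N) -sumr_const_nat.
  by apply: ler_sum_nat => m _; case/andP: (b_inv_bounds m.+1%:Z).
have d_Binv_le : `|d| * Binv k <= 3 * F * K * (C / c).
  apply: le_trans (ler_wpM2l (normr_ge0 d) Binv_le) _.
  have -> : `|d| * (N%:R * c^-1) = `|d| * (N%:R * C^-1) * (C / c).
    by field; rewrite !lt0r_neq0.
  apply: ler_wpM2r; first by rewrite divr_ge0 ?ltW.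
  exact: le_trans (ler_wpM2l (normr_ge0 d) Binv_ge) flux_gap_le.
rewrite -(ger0_norm (ltW N_gt0R)) -normrM /w error_increment ?(ltnW kN) //.
apply: le_trans (ler_normB _ _) _.
rewrite normrM (ger0_norm (sumr_ge0 _ _)); last by move=> m _; rewrite invr_ge0 ltW.
rewrite mulrDr mulr1; apply: lerD => //.
exact: sum_flux_inv_gap_le (ltnW kN).
Qed.

Lemma homogenization_error_le :
  L2norm N (fun i => u0 i - u i) <= 6 * K * (C / c + 1) * epsN R N * L2norm N f.
Proof.
set M := 3 * F * K * (C / c + 1).
have CcK_ge0 : 0 <= K * (C / c + 1) by rewrite mulr_ge0 // addr_ge0 // divr_ge0 // ltW.
have M_ge0 : 0 <= M by rewrite /M -mulrA mulr_ge0 // mulr_ge0.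
have w_mean0 : \sum_(0 <= m < N) 1 * w m.+1%:Z = 0.
  under eq_bigr do rewrite mul1r.
  by rewrite /w sumrB !meanX_eq0_sum ?subrr //; [exact: u_sol.2.1 | exact: u0_sol.2.1].
have w_le := weighted_mean0_bound (fun _ => 1) (fun m => w m%:Z) N (M / N%:R)
  N_gt0 (fun _ => ltr01) w_mean0.
have w_bound : forall m : nat, (m < N)%N -> `|w m.+1%:Z| <= 2 * (M / N%:R).
  apply: w_le => k kN; rewrite ler_pdivlMr // mulrC; exact: error_osc_le.
apply: le_trans (L2norm_le N_gt0 _ _ _ w_bound) _.
  by rewrite mulr_ge0 // divr_ge0 ?ler0n.
have -> : 2 * (M / N%:R) = 6 * K * (C / c + 1) * epsN R N * F.
  by rewrite /M /epsN; ring.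
apply: ler_wpM2l; last exact: meanX_abs_le_L2norm.
have eps_ge0 : 0 <= epsN R N by rewrite invr_ge0 ler0n.
by rewrite -(mulrA 6) mulr_ge0 // mulr_ge0.
Qed.

End HomogenizationError.

Theorem theorem4p6 (R : realType) (p : nat) (c_psi C_psi C'_psi : R) :
  (0 < p)%N -> 0 < c_psi ->
  exists C3 : R,
    forall (N : nat) (psi : int -> int -> R) (f u u0 : int -> R),
      (0 < N)%N -> (p %| N)%N ->
      two_scale N p psi ->
      (forall i j : int, c_psi <= psi i j <= C_psi) ->
      Linf_Np N p (DX N psi) <= C'_psi ->
      periodicN N f -> meanX N f = 0 ->
      solves N (psi_eps psi) f u ->
      solves N (psi0 p psi) f u0 ->
      L2norm N (fun i => u0 i - u i) <= C3 * epsN R N * L2norm N f.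
Proof.
move=> p_gt0 c_gt0.
set K := 2 * p%:R * C'_psi / c_psi ^+ 2 + p%:R * c_psi^-1.
exists (6 * K * (C_psi / c_psi + 1)).
(* The conditions on f are only needed for the existence of u and u0. *)
move=> N psi f u u0 N_gt0 pN psi_two_scale psi_bounds DX_le _ _ u_sol u0_sol.
have psi_ge i j : c_psi <= psi i j by case/andP: (psi_bounds i j).
have psi_step := Linf_DX_step_le _ N_gt0 DX_le.
apply: (homogenization_error_le _ _ _ N_gt0 c_gt0 _ _ _ _ u_sol u0_sol).
- by move=> i; apply: psi_bounds.
- by move=> i; apply: psi0_bounds.
- exact: psi_eps_periodic.
- exact: psi0_periodic.
move=> k kN; apply: le_trans (inv_gap_partial_sum_le psi_two_scale _ _
  N_gt0 p_gt0 c_gt0 psi_ge psi_step k kN) _.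
rewrite /K (_ : N%:R * _ = 2 * p%:R * C'_psi / c_psi ^+ 2) //.
by field; rewrite !lt0r_neq0 ?ltr0n.
Qed.
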